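(* Let $t>0$, let $X\subset\mathbb{R}^d$ and $Y\subset\mathbb{R}^m$ be closed sets, and let $f:X\to Y$ be a $(1/t)$-bi-Hölder homeomorphism. Then for every $x_0\in X$ and every $T\in\mathrm{Tan}(X,x_0)$ there exist $T'\in\mathrm{Tan}(Y,f(x_0))$ and a $(1/t)$-bi-Hölder homeomorphism $g:T\to T'$.
   Context: A map $f:X\to Y$ is a $\beta$-bi-Hölder homeomorphism if it is a bijection and there is $C\ge1$ with $C^{-1}|x-y|^\beta\le|f(x)-f(y)|\le C|x-y|^\beta$ for all $x,y\in X$. With $\mathrm{exc}(A,B)=\sup_{a\in A}\inf_{b\in B}|a-b|$, closed sets $X_m\to X$ (Attouch–Wets) iff for every $r>0$, $\mathrm{exc}(X_m\cap\overline{B}(\mathbf{0},r),X)\to0$ and $\mathrm{exc}(X\cap\overline{B}(\mathbf{0},r),X_m)\to0$. A closed $T\ni\mathbf{0}$ belongs to $\mathrm{Tan}(X,x)$ if $r_j^{-1}(X-x)\to T$ for some $r_j\downarrow0$. *)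

From HB Require Import structures.
From mathcomp Require Import all_boot all_order all_algebra.
From mathcomp Require Import all_classical all_reals all_analysis.
Set Implicit Arguments. Unset Strict Implicit. Unset Printing Implicit Defensive.
Import Order.TTheory GRing.Theory Num.Theory.
Import numFieldNormedType.Exports.
Local Open Scope classical_set_scope.
Local Open Scope ring_scope.

Section Defs.
Variable R : realType.

Definition enorm (d : nat) (v : 'rV[R]_d) : R := Num.sqrt (\sum_(i < d) v ord0 i ^+ 2).

Definition cball0 (d : nat) (r : R) : set 'rV[R]_d := [set x | enorm x <= r].

(* inf_{b in B} |a - b|, in the extended reals (= +oo if B is empty) *)
Definition edist_set (d : nat) (a : 'rV[R]_d) (B : set 'rV[R]_d) : \bar R :=
  ereal_inf [set (enorm (a - b))%:E | b in B].

(* exc(A,B) = sup_{a in A} inf_{b in B} |a - b|, with exc(empty, B) = 0 *)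
Definition exc (d : nat) (A B : set 'rV[R]_d) : \bar R :=
  ereal_sup ([set 0%E] `|` [set edist_set a B | a in A]).

Definition AW_cvg (d : nat) (Xs : nat -> set 'rV[R]_d) (X : set 'rV[R]_d) : Prop :=
  forall r : R, 0 < r ->
    ((fun k => exc (Xs k `&` cball0 r) X) @ \oo --> 0%E) /\
    ((fun k => exc (X `&` cball0 r) (Xs k)) @ \oo --> 0%E).

Definition blowup (d : nat) (X : set 'rV[R]_d) (x : 'rV[R]_d) (r : R) : set 'rV[R]_d :=
  [set r^-1 *: (y - x) | y in X].

Definition Tan (d : nat) (X : set 'rV[R]_d) (x : 'rV[R]_d) : set (set 'rV[R]_d) :=
  [set T : set 'rV[R]_d | closed T /\ T 0 /\
     exists rs : nat -> R,
       (forall j, 0 < rs j) /\ {homo rs : i j / (i <= j)%N >-> j <= i} /\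
       (rs @ \oo --> 0) /\ AW_cvg (fun j => blowup X x (rs j)) T].

Definition biHolder_homeo (d m : nat) (beta : R) (X : set 'rV[R]_d) (Y : set 'rV[R]_m)
    (f : 'rV[R]_d -> 'rV[R]_m) : Prop :=
  [/\ (forall x, X x -> Y (f x)),
      (forall x y, X x -> X y -> f x = f y -> x = y),
      (forall y, Y y -> exists2 x, X x & f x = y) &
      exists C : R, 1 <= C /\ forall x y, X x -> X y ->
        C^-1 * (enorm (x - y)) `^ beta <= enorm (f x - f y) /\
        enorm (f x - f y) <= C * (enorm (x - y)) `^ beta].

End Defs.

From HB Require Import structures.
From mathcomp Require Import all_boot all_order all_algebra.
From mathcomp Require Import all_classical all_reals all_analysis.
From mathcomp Require Import ring lra.
Set Implicit Arguments. Unset Strict Implicit. Unset Printing Implicit Defensive.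
Import Order.TTheory GRing.Theory Num.Theory.
Import numFieldNormedType.Exports.
Local Open Scope classical_set_scope.
Local Open Scope ring_scope.

(* Blowing up X at x0 with scale r and Y at f x0 with scale r ^ b (b = 1/t) turns f
   into maps f_j between the blow-ups which are b-bi-Hoelder with the constant of f.
   Fix an ultrafilter U on nat finer than the cofinite filter, along which bounded
   sequences converge.  Approximating v in T by points a_j of the blow-ups of X, the
   values f_j a_j stay bounded, so g v := lim_U f_j a_j exists, and g inherits the
   bi-Hoelder bounds.  If on some ball the blow-ups of Y were not U-eventually close to
   g(T) (or vice versa), the offending points would have a U-limit, which the bi-Hoelder
   bounds place in g(T) (resp. close to the blow-ups of Y).  Hence closeness at
   precision 1/(k+1) holds on a U-large set of indices for each k, and one index from
   each of these sets gives scales along which the blow-ups of Y converge to g(T). *)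

Section EuclideanNorm.
Variables (R : realType) (n : nat).
Implicit Types (u v w : 'rV[R]_n).

Lemma enorm_ge0 v : 0 <= enorm v.
Proof. exact: sqrtr_ge0. Qed.

Lemma enorm0 : enorm (0 : 'rV[R]_n) = 0.
Proof. by rewrite /enorm big1 ?sqrtr0 // => i _; rewrite mxE expr0n. Qed.

Lemma enorm_eq0 v : enorm v = 0 -> v = 0.
Proof.
move/eqP; rewrite /enorm sqrtr_eq0 => sum_le0.
have sum0 : \sum_(i < n) v ord0 i ^+ 2 = 0.
  by apply/eqP; rewrite eq_le sum_le0 sumr_ge0 // => i _; exact: sqr_ge0.
apply/rowP => i; rewrite mxE; apply/eqP; rewrite -sqrf_eq0; apply/eqP.
exact: (psumr_eq0P (fun i _ => sqr_ge0 (v ord0 i)) sum0).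
Qed.

Lemma enormN v : enorm (- v) = enorm v.
Proof. by rewrite /enorm; congr Num.sqrt; apply: eq_bigr => i _; rewrite mxE sqrrN. Qed.

Lemma enormB u v : enorm (u - v) = enorm (v - u).
Proof. by rewrite -enormN opprB. Qed.

Lemma enormZ (c : R) v : enorm (c *: v) = `|c| * enorm v.
Proof.
rewrite /enorm (eq_bigr (fun i => c ^+ 2 * v ord0 i ^+ 2)) => [|i _]; last first.
  by rewrite mxE exprMn.
by rewrite -mulr_sumr sqrtrM ?sqr_ge0 // sqrtr_sqr.
Qed.

Lemma coord_le_enorm v i : `|v ord0 i| <= enorm v.
Proof.
rewrite /enorm -sqrtr_sqr ler_sqrt ?sumr_ge0 // => [|j _]; last exact: sqr_ge0.
by rewrite (bigD1 i) //= lerDl sumr_ge0 // => j _; exact: sqr_ge0.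
Qed.

Lemma cauchy_schwarz (a c : 'I_n -> R) :
  \sum_i a i * c i <= Num.sqrt (\sum_i a i ^+ 2) * Num.sqrt (\sum_i c i ^+ 2).
Proof.
set A := \sum_i a i ^+ 2; set B := \sum_i c i ^+ 2; set D := \sum_i a i * c i.
have A0 : 0 <= A by rewrite sumr_ge0 // => i _; exact: sqr_ge0.
have B0 : 0 <= B by rewrite sumr_ge0 // => i _; exact: sqr_ge0.
have [B_eq0|B_neq0] := eqVneq B 0.
  have c0 i : c i = 0.
    apply/eqP; rewrite -sqrf_eq0; apply/eqP.
    exact: (psumr_eq0P (fun i _ => sqr_ge0 (c i)) B_eq0).
  by rewrite /D big1 ?mulr_ge0 ?sqrtr_ge0 // => i _; rewrite c0 mulr0.
have B_gt0 : 0 < B by rewrite lt_neqAle eq_sym B_neq0 B0.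
(* the discriminant argument, evaluated at the minimiser [l = D / B] *)
have quad_ge0 l : 0 <= A - 2 * l * D + l ^+ 2 * B.
  have <- : \sum_i (a i - l * c i) ^+ 2 = A - 2 * l * D + l ^+ 2 * B.
    rewrite (eq_bigr (fun i => a i ^+ 2 - (2 * l) * (a i * c i) + l ^+ 2 * c i ^+ 2));
      last by move=> i _; ring.
    by rewrite !big_split /= sumrN -!mulr_sumr.
  by rewrite sumr_ge0 // => i _; exact: sqr_ge0.
have := quad_ge0 (D / B).
have -> : A - 2 * (D / B) * D + (D / B) ^+ 2 * B = A - D ^+ 2 / B.
  by field; rewrite B_neq0.
rewrite subr_ge0 ler_pdivrMr // -sqrtrM // => D2_le.
have [D_le0|D_gt0] := leP D 0; first exact: le_trans D_le0 (sqrtr_ge0 _).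
by rewrite -(ger0_norm (ltW D_gt0)) -sqrtr_sqr ler_sqrt ?mulr_ge0.
Qed.

Lemma enormD u v : enorm (u + v) <= enorm u + enorm v.
Proof.
have uv_ge0 : 0 <= enorm u + enorm v by rewrite addr_ge0 ?enorm_ge0.
rewrite -(ger0_norm uv_ge0) -sqrtr_sqr /enorm ler_sqrt ?sqr_ge0 //.
rewrite sqrrD !sqr_sqrtr ?sumr_ge0 // => [|i _|i _]; last 2 first.
- exact: sqr_ge0.
- exact: sqr_ge0.
rewrite (eq_bigr (fun i => u ord0 i ^+ 2 + 2 * (u ord0 i * v ord0 i) + v ord0 i ^+ 2));
  last by move=> i _; rewrite mxE; ring.
rewrite !big_split /= -mulr_sumr lerD2r lerD2l.
have := cauchy_schwarz (fun i => u ord0 i) (fun i => v ord0 i); rewrite mulr2n; lra.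
Qed.

Lemma enorm_triangle u v w : enorm (u - w) <= enorm (u - v) + enorm (v - w).
Proof. by have := enormD (u - v) (v - w); rewrite addrA subrK. Qed.

Lemma enorm_lipschitz u v : `|enorm u - enorm v| <= enorm (u - v).
Proof.
rewrite ler_norml; apply/andP; split.
  by have := enormD (v - u) u; rewrite subrK enormB; lra.
by have := enormD (u - v) v; rewrite subrK; lra.
Qed.

Lemma mx_norm_le_enorm v : `|v| <= enorm v.
Proof.
rewrite [`|v|]mx_normrE; apply: bigmax_le => [|[i j] _]; first exact: enorm_ge0.
by rewrite /= (ord1 i); exact: coord_le_enorm.
Qed.

Lemma enorm_le_mx_norm v : enorm v <= (n%:R + 1) * `|v|.
Proof.
have bound_ge0 : 0 <= (n%:R + 1) * `|v| by rewrite mulr_ge0 // addr_ge0.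
rewrite -(ger0_norm bound_ge0) -sqrtr_sqr /enorm ler_sqrt ?sqr_ge0 //.
have coord_sqr_le i : v ord0 i ^+ 2 <= `|v| ^+ 2.
  rewrite -real_normK ?num_real // lerXn2r ?nnegrE //.
  by rewrite [leRHS]mx_normrE (le_trans _ (le_bigmax _ _ (ord0, i))).
apply: le_trans (ler_sum _ (fun i _ => coord_sqr_le i)) _.
rewrite sumr_const card_ord -[_ *+ n]mulr_natl exprMn.
apply: ler_wpM2r; first exact: sqr_ge0.
have n_ge0 : 0 <= (n%:R : R) by [].
nra.
Qed.

Lemma cvg_enormP {T : Type} {F : set_system T} {FF : Filter F} (x : T -> 'rV[R]_n)
    (y : 'rV[R]_n) :
  x @ F --> y <-> forall e : R, 0 < e -> \forall t \near F, enorm (x t - y) < e.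
Proof.
have n1_gt0 : 0 < (n%:R + 1 : R) by rewrite ltr_wpDl.
split => [/cvgrPdist_lt x_y e e0 | x_y].
  near=> t; rewrite enormB; apply: le_lt_trans (enorm_le_mx_norm _) _.
  by rewrite mulrC -ltr_pdivlMr //; near: t; apply: x_y; rewrite divr_gt0.
apply/cvgrPdist_lt => e e0; apply: filterS (x_y e e0) => t.
by rewrite enormB; apply: le_lt_trans (mx_norm_le_enorm _).
Unshelve. all: end_near.
Qed.

Lemma cvg_enormB {T : Type} {F : set_system T} {FF : Filter F} (x y : T -> 'rV[R]_n)
    (a c : 'rV[R]_n) :
  x @ F --> a -> y @ F --> c -> enorm (x t - y t) @[t --> F] --> enorm (a - c).
Proof.
move=> /cvg_enormP x_a /cvg_enormP y_c; apply/cvgrPdist_lt => e e0.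
have e2 : 0 < e / 2 by rewrite divr_gt0.
near=> t; apply: le_lt_trans (enorm_lipschitz _ _) _.
have -> : a - c - (x t - y t) = (y t - c) - (x t - a).
  by apply/rowP => i; rewrite !mxE; ring.
apply: le_lt_trans (enorm_triangle _ 0 _) _; rewrite !subr0 sub0r enormN.
rewrite [e]splitr ltrD //; near: t; [exact: y_c | exact: x_a].
Unshelve. all: end_near.
Qed.

Lemma closed_enormP (A : set 'rV[R]_n) :
  closed A <-> forall v, (forall e : R, 0 < e -> exists2 a, A a & enorm (v - a) < e) -> A v.
Proof.
split => [cA v v_adh | A_adh].
  apply: cA => B /nbhs_ballP [e e0 eB]; have [a Aa va] := v_adh e e0.
  exists a; split => //; apply: eB; rewrite -ball_normE /ball_ /=.
  exact: le_lt_trans (mx_norm_le_enorm _) va.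
move=> v v_clA; apply: A_adh => e e0.
have n1_gt0 : 0 < (n%:R + 1 : R) by rewrite ltr_wpDl.
have /v_clA [a [Aa va]] : nbhs v (ball v (e / (n%:R + 1))).
  by apply: nbhsx_ballx; rewrite divr_gt0.
exists a => //; move: va; rewrite -ball_normE /ball_ /= => va.
by apply: le_lt_trans (enorm_le_mx_norm _) _; rewrite mulrC -ltr_pdivlMr.
Qed.

End EuclideanNorm.

Section UltrafilterLimits.
Context {I : Type} (U : set_system I) {UU : UltraFilter U}.

Lemma ultra_cluster_cvg {V : topologicalType} (x : I -> V) (p : V) :
  cluster (x @ U) p -> x @ U --> p.
Proof.
move=> clp B Bp; have [//|UnB] := in_ultra_setVsetC (x @^-1` B) UU.
by have [v [nBv Bv]] := clp (~` B) B UnB Bp.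
Qed.

Lemma ultra_bounded_cvg {R : realType} {n : nat} (x : I -> 'rV[R]_n) (M : R) :
  (\forall j \near U, enorm (x j) <= M) -> exists y : 'rV[R]_n, x @ U --> y.
Proof.
move=> x_bd; pose Box := [set v : 'rV[R]_n | forall i, `[- M, M]%classic (v ord0 i)].
have Box_compact : compact Box.
  by apply: (@rV_compact _ _ (fun=> `[- M, M]%classic)) => _; exact: segment_compact.
have /Box_compact [p [_ clp]] : (x @ U) Box.
  apply: filterS x_bd => j xj_le i; rewrite /= in_itv /= -ler_norml.
  exact: le_trans (coord_le_enorm _ _) xj_le.
by exists p; exact: ultra_cluster_cvg.
Qed.

Lemma ultra_not_near {A : Type} (a0 : A) (P : I -> A -> Prop) :
  ~ (\forall i \near U, forall a, P i a) ->
  exists a : I -> A, \forall i \near U, ~ P i (a i).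
Proof.
move=> not_near; have [//|UnP] := in_ultra_setVsetC [set i | forall a, P i a] UU.
have /choice [a a_spec] i : exists a, ~ (forall a, P i a) -> ~ P i a.
  have [allP|/existsNP [a nPa]] := pselect (forall a, P i a).
    by exists a0 => /(_ allP).
  by exists a.
by exists a; apply: filterS UnP => i /a_spec.
Qed.

End UltrafilterLimits.

Lemma nneg_cvge0P {R : realType} {T : Type} {F : set_system T} {FF : Filter F}
    (u : T -> \bar R) : (forall t, 0 <= u t)%E ->
  u @ F --> 0%E <-> forall e : R, 0 < e -> \forall t \near F, (u t < e%:E)%E.
Proof.
move=> u_ge0; split => [/fine_cvgP [u_fin /cvgr0Pnorm_lt u0] e e0 | u_small].
  near=> t; have ut_fin : u t \is a fin_num by near: t.
  rewrite -(fineK ut_fin) lte_fin.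
  by apply: le_lt_trans (ler_norm _) _; near: t; exact: u0.
have u_fin : \forall t \near F, u t \is a fin_num.
  by apply: filterS (u_small 1 ltr01) => t ut1; rewrite ge0_fin_numE // (lt_trans ut1) ?ltry.
apply/fine_cvgP; split => //; apply/cvgr0Pnorm_lt => e e0.
near=> t; have ut_fin : u t \is a fin_num by near: t.
have : (u t < e%:E)%E by near: t; exact: u_small.
by rewrite -(fineK ut_fin) lte_fin ger0_norm // fine_ge0.
Unshelve. all: end_near.
Qed.

Lemma invSn_lt_near {R : realType} (e : R) : 0 < e ->
  \forall n \near \oo, (n.+1%:R : R)^-1 < e.
Proof.
move=> e_gt0; have /cvgr0Pnorm_lt := @cvg_harmonic R; move/(_ _ e_gt0).
by apply: filterS => n; rewrite /harmonic /= ger0_norm.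
Qed.

Lemma filter_increasing_subseq {F : set_system nat} {FF : ProperFilter F}
    (P : nat -> set nat) :
  \oo `<=` F -> (forall k, F (P k)) ->
  exists J : nat -> nat, {homo J : i j / (i < j)%N} /\ forall k, P k (J k).
Proof.
move=> ooF FP.
have /choice [next next_spec] kN : exists j, P kN.1 j /\ (kN.2 < j)%N.
  by have [j] := filter_ex (filterI (FP kN.1) (ooF _ (nbhs_infty_gt kN.2))); exists j.
pose fix J k := if k is k'.+1 then next (k, J k') else next (0, 0)%N.
exists J; split => [|[|k]]; last 2 first.
- exact: (next_spec (0, 0)%N).1.
- exact: (next_spec (k.+1, J k)).1.
by apply: (homo_ltn ltn_trans) => k; exact: (next_spec (k.+1, J k)).2.
Qed.

Section Excess.
Variables (R : realType) (n : nat).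
Implicit Types (A B : set 'rV[R]_n) (a : 'rV[R]_n).

Lemma edist_set_ge0 a B : (0 <= edist_set a B)%E.
Proof. by apply/ereal_infP => _ [c _ <-]; rewrite lee_fin enorm_ge0. Qed.

Lemma edist_set_le a B c : B c -> (edist_set a B <= (enorm (a - c))%:E)%E.
Proof. by move=> Bc; apply: ereal_inf_lbound; exists c. Qed.

Lemma edist_set_lt a B (e : R) :
  (edist_set a B < e%:E)%E -> exists2 c, B c & enorm (a - c) < e.
Proof. by move=> /ereal_inf_lt [_ [c Bc <-]]; rewrite lte_fin; exists c. Qed.

Lemma exc_ge0 A B : (0 <= exc A B)%E.
Proof. by apply: ereal_sup_ubound; left. Qed.

Lemma edist_set_le_exc A B a : A a -> (edist_set a B <= exc A B)%E.
Proof. by move=> Aa; apply: ereal_sup_ubound; right; exists a. Qed.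

Lemma exc_lt A B a (e : R) :
  A a -> (exc A B < e%:E)%E -> exists2 c, B c & enorm (a - c) < e.
Proof. by move=> Aa /(le_lt_trans (edist_set_le_exc B Aa)); exact: edist_set_lt. Qed.

Lemma exc_le A B (e : R) : 0 <= e ->
  (forall a, A a -> exists2 c, B c & enorm (a - c) <= e) -> (exc A B <= e%:E)%E.
Proof.
move=> e_ge0 A_near; apply: ge_ereal_sup => _ [-> | [a Aa <-]]; first by rewrite lee_fin.
have [c Bc ac] := A_near a Aa.
by apply: le_trans (edist_set_le a Bc) _; rewrite lee_fin.
Qed.

Lemma AW_cvg_exc_lt (Xs : nat -> set 'rV[R]_n) T (r e : R) :
  AW_cvg Xs T -> 0 < r -> 0 < e ->
  (\forall j \near \oo, (exc (Xs j `&` cball0 r) T < e%:E)%E) /\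
  (\forall j \near \oo, (exc (T `&` cball0 r) (Xs j) < e%:E)%E).
Proof.
move=> /(_ r) XsT r0 e0; have [XsT1 XsT2] := XsT r0.
by split; [move: XsT1 | move: XsT2] => /nneg_cvge0P; apply => // j; exact: exc_ge0.
Qed.

Lemma AW_cvg_approx (Xs : nat -> set 'rV[R]_n) T v :
  AW_cvg Xs T -> (forall j, Xs j !=set0) -> T v ->
  exists2 a : nat -> 'rV[R]_n, (forall j, Xs j (a j)) & a @ \oo --> v.
Proof.
move=> XsT Xs_n0 Tv.
have /choice [a a_near] j : exists a, Xs j a /\
    ((enorm (v - a))%:E < edist_set v (Xs j) + (j.+1%:R^-1)%:E)%E.
  have [c Xc] := Xs_n0 j.
  have d_fin : edist_set v (Xs j) \is a fin_num.
    by rewrite ge0_fin_numE ?edist_set_ge0 // (le_lt_trans (edist_set_le v Xc)) ?ltry.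
  have j_inv_gt0 : 0 < (j.+1%:R : R)^-1 by rewrite invr_gt0.
  by have [_ [u Xu <-]] := lb_ereal_inf_adherent j_inv_gt0 d_fin; exists u.
exists a => [j|]; first by have [] := a_near j.
apply/cvg_enormP => e e0; have e2 : 0 < e / 2 by rewrite divr_gt0.
have r0 : 0 < enorm v + 1 by rewrite ltr_wpDl ?enorm_ge0.
have Tv_ball : (T `&` cball0 (enorm v + 1)) v by split => //; rewrite /cball0 /= lerDl.
have [_ exc_small] := AW_cvg_exc_lt XsT r0 e2.
near=> j; rewrite enormB -lte_fin.
apply: lt_le_trans (a_near j).2 _; rewrite [e]splitr EFinD leeD //.
  exact/ltW/(le_lt_trans (edist_set_le_exc _ Tv_ball))/(near exc_small j).
by rewrite lee_fin; apply/ltW; near: j; exact: invSn_lt_near.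
Unshelve. all: end_near.
Qed.

Lemma AW_cvg_closed_limit (Xs : nat -> set 'rV[R]_n) T {F : set_system nat}
    {FF : ProperFilter F} (a : nat -> 'rV[R]_n) (w : 'rV[R]_n) (M : R) :
  \oo `<=` F -> AW_cvg Xs T -> closed T ->
  (\forall j \near F, Xs j (a j) /\ enorm (a j) <= M) -> a @ F --> w -> T w.
Proof.
move=> ooF XsT /closed_enormP cT a_bd /cvg_enormP a_w; apply: cT => e e0.
have e2 : 0 < e / 2 by rewrite divr_gt0.
have M1 : 0 < `|M| + 1 by rewrite ltr_wpDl.
have [exc_small _] := AW_cvg_exc_lt XsT M1 e2.
have [j [[[Xj aj_le] exc_j] aj_w]] :=
  filter_ex (filterI (filterI a_bd (ooF _ exc_small)) (a_w _ e2)).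
have [c Tc ajc] : exists2 c, T c & enorm (a j - c) < e / 2.
  apply: exc_lt exc_j; split => //; rewrite /cball0 /=.
  by rewrite (le_trans aj_le) // (le_trans (ler_norm M)) // lerDl.
exists c => //; apply: le_lt_trans (enorm_triangle _ (a j) _) _.
by rewrite enormB [e]splitr ltrD.
Qed.

End Excess.

Section PowR.
Variables (R : realType) (b : R).
Hypothesis b_gt0 : 0 < b.

Lemma powR_le_powRV (x K : R) : 0 <= x -> 0 <= K -> x `^ b <= K -> x <= K `^ b^-1.
Proof.
move=> x_ge0 K_ge0 xK.
have <- : (x `^ b) `^ b^-1 = x by rewrite -powRrM mulfV ?gt_eqF // powRr1.
by apply: ge0_ler_powR; rewrite ?invr_ge0 ?(ltW b_gt0) ?nnegrE ?powR_ge0.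
Qed.

Lemma cvg_powR_nneg {T : Type} {F : set_system T} {FF : Filter F} (p : T -> R) (a : R) :
  0 <= a -> (\forall t \near F, 0 <= p t) -> p @ F --> a ->
  p t `^ b @[t --> F] --> a `^ b.
Proof.
rewrite le_eqVlt => /predU1P [<- | a_gt0] p_ge0 p_a.
  rewrite powR0 ?gt_eqF //; apply/cvgrPdist_lt => e e0.
  have root_gt0 : 0 < e `^ b^-1 by rewrite powR_gt0.
  have root_powR : (e `^ b^-1) `^ b = e by rewrite -powRrM mulVf ?gt_eqF // powRr1 // ltW.
  have p_small : \forall t \near F, p t < e `^ b^-1.
    move/cvgrPdist_lt : p_a => /(_ _ root_gt0); apply: filterS => t.
    by rewrite sub0r normrN => /ltr_normlW.
  near=> t; have pt_ge0 : 0 <= p t by near: t.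
  rewrite sub0r normrN ger0_norm ?powR_ge0 // -[X in _ < X]root_powR.
  by apply: gt0_ltr_powR; rewrite ?nnegrE ?powR_ge0 //; near: t.
have powR_cont : {for a, continuous (fun x : R => x `^ b)}.
  apply: differentiable_continuous; apply/derivable1_diffP.
  by apply: derivable_powR; rewrite in_itv /= andbT.
exact: (@continuous_cvg _ _ _ _ _ _ _ _ powR_cont p_a).
Unshelve. all: end_near.
Qed.

End PowR.

Definition biHolder_on (R : realType) (d m : nat) (C b : R) (A : set 'rV[R]_d)
    (f : 'rV[R]_d -> 'rV[R]_m) : Prop :=
  forall x y, A x -> A y ->
    C^-1 * enorm (x - y) `^ b <= enorm (f x - f y) /\
    enorm (f x - f y) <= C * enorm (x - y) `^ b.

Lemma blowupP (R : realType) (n : nat) (A : set 'rV[R]_n) (a u : 'rV[R]_n) (r : R) :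
  0 < r -> blowup A a r u <-> A (a + r *: u).
Proof.
move=> r_gt0; split => [[y Ay <-] | Au].
  by rewrite scalerA mulfV ?gt_eqF // scale1r addrC subrK.
by exists (a + r *: u); rewrite // addrC addKr scalerA mulVf ?gt_eqF // scale1r.
Qed.

Section BiHolder.
Variables (R : realType) (d m : nat) (C b : R).
Hypotheses (C_gt0 : 0 < C) (b_gt0 : 0 < b).
Implicit Types (A : set 'rV[R]_d) (f : 'rV[R]_d -> 'rV[R]_m).

Lemma biHolder_on_inj A f x y :
  biHolder_on C b A f -> A x -> A y -> f x = f y -> x = y.
Proof.
move=> fH Ax Ay fxy; have [low _] := fH x y Ax Ay; move: low.
rewrite fxy subrr enorm0 pmulr_rle0 ?invr_gt0 // => pow_le0.
have /powR_eq0_eq0/enorm_eq0/eqP : enorm (x - y) `^ b = 0.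
  by apply/eqP; rewrite eq_le pow_le0 powR_ge0.
by rewrite subr_eq0 => /eqP.
Qed.

Lemma biHolder_on_dist_le A f x y (K : R) : biHolder_on C b A f -> A x -> A y ->
  enorm (f x - f y) <= K -> enorm (x - y) <= (C * K) `^ b^-1.
Proof.
move=> fH Ax Ay fxy_le; have [low _] := fH x y Ax Ay.
have K_ge0 : 0 <= K := le_trans (enorm_ge0 _) fxy_le.
apply: powR_le_powRV; rewrite ?enorm_ge0 ?mulr_ge0 ?(ltW C_gt0) //.
by rewrite -ler_pdivrMl // (le_trans low).
Qed.

Lemma biHolder_on_cvg {T : Type} {F : set_system T} {FF : Filter F} A f
    (x : T -> 'rV[R]_d) (a : 'rV[R]_d) :
  biHolder_on C b A f -> A a -> (\forall t \near F, A (x t)) -> x @ F --> a ->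
  f (x t) @[t --> F] --> f a.
Proof.
move=> fH Aa Ax x_a; apply/cvg_enormP => e e0.
have dist_pow0 : enorm (x t - a) `^ b @[t --> F] --> 0.
  rewrite -(powR0 (lt0r_neq0 b_gt0)); apply: cvg_powR_nneg => //.
    exact: nearW (fun t => enorm_ge0 _).
  by rewrite -(enorm0 R d) -(subrr a); exact: cvg_enormB x_a (cvg_cst a).
have C_dist0 : C * enorm (x t - a) `^ b @[t --> F] --> 0.
  by rewrite -[X in _ --> X](mulr0 C); exact: cvgMl_tmp.
have C_dist_small := cvgr_lt _ C_dist0 e e0.
near=> t; have Axt : A (x t) by near: t.
have [_ up] := fH (x t) a Axt Aa; apply: le_lt_trans up _; near: t; exact: C_dist_small.
Unshelve. all: end_near.
Qed.

Lemma biHolder_on_lim {I : Type} {F : set_system I} {FF : ProperFilter F}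
    (A : I -> set 'rV[R]_d) (h : I -> 'rV[R]_d -> 'rV[R]_m) (x y : I -> 'rV[R]_d)
    (u v : 'rV[R]_d) (p q : 'rV[R]_m) :
  (forall i, biHolder_on C b (A i) (h i)) ->
  (\forall i \near F, A i (x i) /\ A i (y i)) ->
  x @ F --> u -> y @ F --> v -> h i (x i) @[i --> F] --> p -> h i (y i) @[i --> F] --> q ->
  C^-1 * enorm (u - v) `^ b <= enorm (p - q) /\ enorm (p - q) <= C * enorm (u - v) `^ b.
Proof.
move=> hH Axy x_u y_v hx_p hy_q.
have dist_pow : enorm (x i - y i) `^ b @[i --> F] --> enorm (u - v) `^ b.
  apply: cvg_powR_nneg; rewrite ?enorm_ge0 //; first exact: nearW (fun i => enorm_ge0 _).
  exact: cvg_enormB.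
have hdist : enorm (h i (x i) - h i (y i)) @[i --> F] --> enorm (p - q).
  exact: cvg_enormB.
have le_lim (s s' : I -> R) l l' : s @ F --> l -> s' @ F --> l' ->
    (\forall i \near F, s i <= s' i) -> l <= l'.
  move=> s_l s'_l' ss'; rewrite -subr_ge0; apply: cvgr_to_ge (cvgB s'_l' s_l) _.
  by apply: filterS ss' => i; rewrite subr_ge0.
split; [apply: le_lim (cvgMl_tmp dist_pow) hdist _ | apply: le_lim hdist (cvgMl_tmp dist_pow) _];
  by apply: filterS Axy => i [Axi Ayi]; have [] := hH i _ _ Axi Ayi.
Qed.

Lemma biHolder_on_lim_eq {I : Type} {F : set_system I} {FF : ProperFilter F}
    (A : I -> set 'rV[R]_d) (h : I -> 'rV[R]_d -> 'rV[R]_m) (x y : I -> 'rV[R]_d)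
    (u : 'rV[R]_d) (p q : 'rV[R]_m) :
  (forall i, biHolder_on C b (A i) (h i)) ->
  (\forall i \near F, A i (x i) /\ A i (y i)) ->
  x @ F --> u -> y @ F --> u -> h i (x i) @[i --> F] --> p -> h i (y i) @[i --> F] --> q ->
  p = q.
Proof.
move=> hH Axy x_u y_u hx_p hy_q.
have [_] := biHolder_on_lim hH Axy x_u y_u hx_p hy_q.
rewrite subrr enorm0 powR0 ?gt_eqF // mulr0 => pq_le0.
by apply/eqP; rewrite -subr_eq0; apply/eqP/enorm_eq0/eqP; rewrite eq_le pq_le0 enorm_ge0.
Qed.

Lemma biHolder_on_blowup A f (a : 'rV[R]_d) (r : R) : biHolder_on C b A f -> 0 < r ->
  biHolder_on C b (blowup A a r) (fun u => (r `^ b)^-1 *: (f (a + r *: u) - f a)).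
Proof.
move=> fH r_gt0 u v /(blowupP _ _ _ r_gt0) Au /(blowupP _ _ _ r_gt0) Av.
have rb_gt0 : 0 < r `^ b by rewrite powR_gt0.
rewrite -scalerBr opprB addrA subrK enormZ ger0_norm ?invr_ge0 ?(ltW rb_gt0) //.
have [] := fH _ _ Au Av.
have -> : a + r *: u - (a + r *: v) = r *: (u - v).
  by rewrite scalerBr opprD addrACA subrr add0r.
rewrite enormZ ger0_norm ?(ltW r_gt0) // powRM ?enorm_ge0 ?(ltW r_gt0) //.
rewrite mulrCA (mulrCA C) => low up.
by split; [rewrite ler_pdivlMl | rewrite ler_pdivrMl].
Qed.

End BiHolder.

Section TangentOfImage.
Variables (R : realType) (d m : nat) (b C : R) (X : set 'rV[R]_d) (Y : set 'rV[R]_m)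
  (f : 'rV[R]_d -> 'rV[R]_m) (x0 : 'rV[R]_d) (T : set 'rV[R]_d) (rs : nat -> R)
  (U : set_system nat).
Hypotheses (b_gt0 : 0 < b) (C_ge1 : 1 <= C) (fXY : forall x, X x -> Y (f x))
  (f_onto : forall y, Y y -> exists2 x, X x & f x = y) (fH : biHolder_on C b X f)
  (Xx0 : X x0) (T_closed : closed T) (T0 : T 0) (rs_gt0 : forall j, 0 < rs j)
  (rs_noninc : {homo rs : i j / (i <= j)%N >-> j <= i}) (rs_cvg0 : rs @ \oo --> 0)
  (XT : AW_cvg (fun j => blowup X x0 (rs j)) T) (ooU : \oo `<=` U).
Context {UU : UltraFilter U}.

Let C_gt0 : 0 < C := lt_le_trans ltr01 C_ge1.

Let s j := rs j `^ b.
Let Xj j := blowup X x0 (rs j).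
Let Yj j := blowup Y (f x0) (s j).
Let fj j u := (s j)^-1 *: (f (x0 + rs j *: u) - f x0).

Let s_gt0 j : 0 < s j. Proof. exact: powR_gt0. Qed.

Let Xj0 j : Xj j 0.
Proof. by apply/blowupP => //; rewrite scaler0 addr0. Qed.

Let fj0 j : fj j 0 = 0.
Proof. by rewrite /fj scaler0 addr0 subrr scaler0. Qed.

Let fjH j : biHolder_on C b (Xj j) (fj j).
Proof. exact: biHolder_on_blowup. Qed.

Let fj_Yj j u : Xj j u -> Yj j (fj j u).
Proof.
move=> /(blowupP _ _ _ (rs_gt0 j)) /fXY Yfu; apply/blowupP => //.
by rewrite scalerA mulfV ?gt_eqF // scale1r addrC subrK.
Qed.

Let Yj_fj j y : Yj j y -> exists2 u, Xj j u & fj j u = y.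
Proof.
move=> /(blowupP _ _ _ (s_gt0 j)) /f_onto [x Xx fx]; exists ((rs j)^-1 *: (x - x0)).
  by apply/blowupP => //; rewrite scalerA mulfV ?gt_eqF // scale1r addrC subrK.
rewrite /fj scalerA mulfV ?gt_eqF // scale1r [x0 + _]addrC subrK fx addrAC subrr add0r.
by rewrite scalerA mulVf ?gt_eqF // scale1r.
Qed.

Let approx_ex v : exists a, (forall j, Xj j (a j)) /\ (T v -> a @ \oo --> v).
Proof.
have [Tv|nTv] := pselect (T v); last by exists (fun=> 0); split => [j|/nTv []]; exact: Xj0.
have [|a Xa a_v] := AW_cvg_approx XT _ Tv; first by move=> j; exists 0; exact: Xj0.
by exists a.
Qed.

Let ap v := projT1 (cid (approx_ex v)).

Let ap_Xj v j : Xj j (ap v j).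
Proof. exact: (projT2 (cid (approx_ex v))).1. Qed.

Let ap_cvg v : T v -> ap v @ U --> v.
Proof. by move=> Tv B vB; apply: ooU; exact: (projT2 (cid (approx_ex v))).2 Tv B vB. Qed.

Let g v := lim (fj j (ap v j) @[j --> U]).

Let g_cvg v : T v -> fj j (ap v j) @[j --> U] --> g v.
Proof.
move=> Tv; have ap_bd : \forall j \near U, enorm (ap v j) <= enorm v + 1.
  move/cvg_enormP : (ap_cvg Tv) => /(_ 1 ltr01); apply: filterS => j ap_near.
  have := enorm_triangle (ap v j) v 0; rewrite !subr0; lra.
have [|p fap_p] := ultra_bounded_cvg (x := fun j => fj j (ap v j))
    (M := C * (enorm v + 1) `^ b).
  apply: filterS ap_bd => j ap_le; have [_] := fjH (ap_Xj v j) (Xj0 j).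
  rewrite fj0 !subr0 => /le_trans; apply; rewrite ler_pM2l //.
  by apply: ge0_ler_powR; rewrite ?(ltW b_gt0) ?nnegrE ?addr_ge0 ?enorm_ge0.
by rewrite /g (cvg_lim _ fap_p).
Qed.

Let gH : biHolder_on C b T g.
Proof.
move=> u v Tu Tv; apply: biHolder_on_lim fjH _ (ap_cvg Tu) (ap_cvg Tv) (g_cvg Tu) (g_cvg Tv) => //.
exact: nearW.
Qed.

Let g0 : g 0 = 0.
Proof.
have fj0_cvg : fj j ((fun=> 0) j) @[j --> U] --> (0 : 'rV[R]_m).
  by under eq_fun do rewrite fj0; exact: cvg_cst.
apply: (biHolder_on_lim_eq b_gt0 fjH _ (ap_cvg T0) (cvg_cst (0 : 'rV[R]_d)) (g_cvg T0) fj0_cvg).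
by apply: nearW => j; split.
Qed.

Let Tp := g @` T.

Let Tp_closed : closed Tp.
Proof.
apply/closed_enormP => y y_adh.
have /choice [v v_spec] n : exists v, T v /\ enorm (y - g v) < (n.+1%:R)^-1.
  have n_inv_gt0 : 0 < (n.+1%:R : R)^-1 by rewrite invr_gt0.
  by have [_ [v Tv <-]] := y_adh _ n_inv_gt0; exists v.
have gv_y : (fun n => g (v n)) @ \oo --> y.
  apply/cvg_enormP => e e0; apply: filterS (invSn_lt_near e0) => n.
  by rewrite enormB; apply: lt_trans (v_spec n).2.
have [|w v_w] := ultra_bounded_cvg (x := v) (M := (C * (enorm y + 1)) `^ b^-1).
  apply: nearW => n; rewrite -[v n]subr0.
  apply: (biHolder_on_dist_le C_gt0 b_gt0 gH (v_spec n).1 T0).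
  rewrite g0; apply: le_trans (enorm_triangle _ y _) _.
  rewrite !subr0 enormB addrC lerD2l; apply/ltW/(lt_le_trans (v_spec n).2).
  by rewrite invf_le1 ?ler1n.
have Tv_near : \forall n \near U, T (v n) by apply: nearW => n; exact: (v_spec n).1.
have Tw : T w by exact: (closed_cvg T T_closed Tv_near w v_w).
have gv_gw : (fun n => g (v n)) @ U --> g w.
  exact: (biHolder_on_cvg (T := nat) (F := U) b_gt0 gH Tw Tv_near v_w).
have gv_yU : (fun n => g (v n)) @ U --> y by move=> B /gv_y; exact: ooU.
by exists w => //; exact: (cvg_unique (@norm_hausdorff _ _) gv_gw gv_yU).
Qed.

Let fj_near_Tp (rho e : R) : 0 < e ->
  \forall j \near U, forall u, Xj j u -> enorm (fj j u) <= rho ->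
    exists2 y, Tp y & enorm (fj j u - y) < e.
Proof.
move=> e_gt0; apply: contrapT => /(ultra_not_near 0) [u u_bad].
have {}u_bad : \forall j \near U, [/\ Xj j (u j), enorm (fj j (u j)) <= rho &
    forall y, Tp y -> e <= enorm (fj j (u j) - y)].
  apply: filterS u_bad => j /not_implyP [Xu /not_implyP [fu_le no_y]].
  by split => // y Ty; rewrite leNgt; apply/negP => fu_y; apply: no_y; exists y.
have u_bd : \forall j \near U, Xj j (u j) /\ enorm (u j) <= (C * rho) `^ b^-1.
  apply: filterS u_bad => j [Xu fu_le _]; split => //; rewrite -[u j]subr0.
  by apply: (biHolder_on_dist_le C_gt0 b_gt0 (@fjH j) Xu (Xj0 j)); rewrite fj0 subr0.
have [w u_w] := ultra_bounded_cvg (filterS (fun j => @proj2 _ _) u_bd).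
have Tw : T w by exact: (AW_cvg_closed_limit ooU XT T_closed u_bd u_w).
have [p fu_p] := ultra_bounded_cvg (x := fun j => fj j (u j))
  (filterS (fun j => fun '(And3 _ fu_le _) => fu_le) u_bad).
have p_gw : p = g w.
  apply: (biHolder_on_lim_eq b_gt0 fjH _ u_w (ap_cvg Tw) fu_p (g_cvg Tw)).
  by apply: filterS u_bd => j [Xu _]; split.
move/cvg_enormP : fu_p => /(_ e e_gt0) fu_near.
have [j [[_ _ far] fu_p]] := filter_ex (filterI u_bad fu_near).
have Tp_p : Tp p by rewrite p_gw; exists w.
by move: (far p Tp_p); rewrite leNgt fu_p.
Qed.

Let Yj_near_Tp (rho e : R) : 0 < e ->
  \forall j \near U, forall y, Yj j y -> enorm y <= rho ->
    exists2 y', Tp y' & enorm (y - y') < e.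
Proof.
move=> e_gt0; apply: filterS (fj_near_Tp rho e_gt0) => j fj_near y.
by move=> /Yj_fj [u Xu <-]; exact: fj_near.
Qed.

Let Tp_near_Yj (rho e : R) : 0 < e ->
  \forall j \near U, forall v, T v -> enorm (g v) <= rho ->
    exists2 y, Yj j y & enorm (g v - y) < e.
Proof.
move=> e_gt0; apply: contrapT => /(ultra_not_near 0) [v v_bad].
have {}v_bad : \forall j \near U, [/\ T (v j), enorm (g (v j)) <= rho &
    forall y, Yj j y -> e <= enorm (g (v j) - y)].
  apply: filterS v_bad => j /not_implyP [Tv /not_implyP [gv_le no_y]].
  by split => // y Yy; rewrite leNgt; apply/negP => gv_y; apply: no_y; exists y.
have Tv_near : \forall j \near U, T (v j) by apply: filterS v_bad => j [].
have [|w v_w] := ultra_bounded_cvg (x := v) (M := (C * rho) `^ b^-1).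
  apply: filterS v_bad => j [Tv gv_le _]; rewrite -[v j]subr0.
  by apply: (biHolder_on_dist_le C_gt0 b_gt0 gH Tv T0); rewrite g0 subr0.
have Tw : T w by exact: (closed_cvg T T_closed Tv_near w v_w).
have gv_gw : (fun j => g (v j)) @ U --> g w.
  exact: (biHolder_on_cvg (T := nat) (F := U) b_gt0 gH Tw Tv_near v_w).
have dist0 : enorm (g (v j) - fj j (ap w j)) @[j --> U] --> 0.
  by rewrite -(enorm0 R m) -(subrr (g w)); exact: cvg_enormB gv_gw (g_cvg Tw).
have [j [[_ _ far] near0]] := filter_ex (filterI v_bad (cvgr_lt _ dist0 e e_gt0)).
by move: (far _ (fj_Yj (ap_Xj w j))); rewrite leNgt near0.
Qed.

Let Yj_Tp_close j (r e : R) :=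
  (forall y, Yj j y -> enorm y <= r -> exists2 y', Tp y' & enorm (y - y') < e) /\
  (forall v, T v -> enorm (g v) <= r -> exists2 y, Yj j y & enorm (g v - y) < e).

Let Yj_AW_cvg (J : nat -> nat) :
  (forall k, Yj_Tp_close (J k) k.+1%:R k.+1%:R^-1) -> AW_cvg (fun k => Yj (J k)) Tp.
Proof.
move=> J_close r r_gt0; have r_le_near : \forall k \near \oo, r <= k.+1%:R.
  by apply: filterS (nbhs_infty_ger r) => k /le_trans; apply; rewrite ler_nat.
split; apply/nneg_cvge0P => [k|e e_gt0]; rewrite ?exc_ge0 //;
  near=> k; have r_le : r <= k.+1%:R by near: k.
all: have k_inv_ge0 : 0 <= (k.+1%:R : R)^-1 by rewrite invr_ge0.
all: apply: le_lt_trans (exc_le k_inv_ge0 _) _;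
  last by rewrite lte_fin; near: k; exact: invSn_lt_near.
- move=> a [Ya ra]; have [y' Ty' ay'] := (J_close k).1 a Ya (le_trans ra r_le).
  by exists y'; last exact: ltW.
- move=> _ [[v Tv <-] ra]; have [y Yy vy] := (J_close k).2 v Tv (le_trans ra r_le).
  by exists y; last exact: ltW.
Unshelve. all: end_near.
Qed.

Let Tp_tangent : Tan Y (f x0) Tp.
Proof.
have [J [J_incr J_close]] : exists J : nat -> nat,
    {homo J : i j / (i < j)%N} /\ forall k, Yj_Tp_close (J k) k.+1%:R k.+1%:R^-1.
  apply: (filter_increasing_subseq (P := fun k j => Yj_Tp_close j k.+1%:R k.+1%:R^-1) ooU).
  move=> k; have k_inv_gt0 : 0 < (k.+1%:R : R)^-1 by rewrite invr_gt0.
  exact: filterI (Yj_near_Tp _ k_inv_gt0) (Tp_near_Yj _ k_inv_gt0).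
have J_oo : J @ \oo --> \oo.
  have J_ge k : (k <= J k)%N.
    by elim: k => // k IH; exact: leq_ltn_trans IH (J_incr _ _ (ltnSn k)).
  by apply/cvgnyPge => N; apply: filterS (nbhs_infty_ge N) => k /leq_trans; apply.
split; first exact: Tp_closed.
split; first by exists 0; rewrite ?g0.
exists (s \o J); split; first by move=> k; exact: s_gt0.
split.
  move=> i j ij; apply: ge0_ler_powR; rewrite ?nnegrE ?(ltW b_gt0) ?(ltW (rs_gt0 _)) //.
  exact/rs_noninc/(ltnW_homo J_incr).
split; last exact: Yj_AW_cvg.
rewrite -(powR0 (lt0r_neq0 b_gt0)); apply: cvg_powR_nneg => //.
  exact: nearW (fun k => ltW (rs_gt0 _)).
exact: cvg_comp J_oo rs_cvg0.
Qed.

Lemma tangent_biHolder_image :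
  exists T' : set 'rV[R]_m, Tan Y (f x0) T' /\ exists g, biHolder_homeo b T T' g.
Proof.
exists Tp; split; first exact: Tp_tangent.
exists g; split.
- by move=> v Tv; exists v.
- by move=> u v Tu Tv; exact: (biHolder_on_inj C_gt0 gH Tu Tv).
- by move=> _ [v Tv <-]; exists v.
- by exists C; split => //; exact: gH.
Qed.

End TangentOfImage.

Unset Implicit Arguments.

Theorem lemma9p1 (R : realType) (d m : nat) (t : R) (X : set 'rV[R]_d) (Y : set 'rV[R]_m)
    (f : 'rV[R]_d -> 'rV[R]_m) :
  0 < t -> closed X -> closed Y -> biHolder_homeo t^-1 X Y f ->
  forall x0 : 'rV[R]_d, X x0 ->
  forall T : set 'rV[R]_d, Tan X x0 T ->
  exists T' : set 'rV[R]_m, Tan Y (f x0) T' /\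
    exists g : 'rV[R]_d -> 'rV[R]_m, biHolder_homeo t^-1 T T' g.
Proof.
move=> t_gt0 _ _ [fXY _ f_onto [C [C_ge1 fH]]] x0 Xx0 T.
move=> [T_closed [T0 [rs [rs_gt0 [rs_noninc [rs_cvg0 XT]]]]]].
have b_gt0 : 0 < t^-1 by rewrite invr_gt0.
have [U [UU ooU]] := ultraFilterLemma (F := \oo) _.
exact: (tangent_biHolder_image b_gt0 C_ge1 fXY f_onto fH Xx0 T_closed T0 rs_gt0
  rs_noninc rs_cvg0 XT ooU).
Qed.
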